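(* Let $L_1(x,y),\dots,L_k(x,y)$ be linear ordinary differential operators in $x$, $L_m(x,y)=\sum_{j=0}^{n_m} l_{m,j}(x,y)D_x^j$ with $l_{m,n_m}\not\equiv 0$, and put $N=\sum_{m=1}^k n_m+2k$. Then for every integer $p$ with $2p>N$ there exist functions $a_0,\dots,a_{p-1},b_0,\dots,b_{p-1}\in\mathcal K$, not all identically zero, such that the partial differential operator $$P=\sum_{i=0}^{p-1}a_i(x,y)D_y^iD_x+\sum_{i=0}^{p-1}b_i(x,y)D_y^i$$ satisfies $P\big(L_1(x,y)\varphi_1(x)+\dots+L_k(x,y)\varphi_k(x)\big)\equiv 0$ for all smooth functions $\varphi_1(x),\dots,\varphi_k(x)$. In particular (case $k=1$), for a single operator $L$ of order $n$ such $P$ exists whenever $p>(n+2)/2$.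
   Context: $\mathcal K$ denotes a differential field of functions of two variables $(x,y)$, all defined on a common open subset of $\mathbb R^2$ (e.g. $\mathbb Q(x,y)$), closed under $\partial_x$ and $\partial_y$. $D_x=d/dx$, $D_y=\partial/\partial y$. A linear ordinary differential operator (LODO) in $x$ is an operator $L(x,y)=\sum_{j=0}^n l_j(x,y)D_x^j$ with coefficients in $\mathcal K$; operators whose coefficients depend on $x$ only are written $R(x)$. The functions $\varphi_i(x)$ are arbitrary smooth functions of $x$ alone. *)

From HB Require Import structures.
From mathcomp Require Import all_boot all_order all_algebra.
Set Implicit Arguments. Unset Strict Implicit. Unset Printing Implicit Defensive.
Import Order.TTheory GRing.Theory Num.Theory.
Local Open Scope ring_scope.

Definition derivation (A : comNzRingType) (D : A -> A) : Prop :=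
  (forall u v : A, D (u + v) = D u + D v) /\
  (forall u v : A, D (u * v) = D u * v + u * D v).

(* Linear ordinary differential operator in x, with coefficients c j (j <= n)
   in K (embedded into the function ring A by iota), applied to u. *)
Definition lodo_apply (K : fieldType) (A : comNzRingType) (iota : K -> A)
  (Dx : A -> A) (n : nat) (c : nat -> K) (u : A) : A :=
  \sum_(j < n.+1) iota (c j) * iter j Dx u.

Definition P_apply (K : fieldType) (A : comNzRingType) (iota : K -> A)
  (Dx Dy : A -> A) (p : nat) (a b : 'I_p -> K) (u : A) : A :=
  \sum_(i < p) (iota (a i) * iter i Dy (Dx u) + iota (b i) * iter i Dy u).

From HB Require Import structures.
From mathcomp Require Import all_boot all_order all_algebra.
Import GRing.Theory.
Local Open Scope ring_scope.
Set Implicit Arguments.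

(* Fix phi_1, ..., phi_k independent of y.  An "x-expression" of
   orders d_m is a sum  sum_m sum_{j < d_m} c_{m,j} Dx^j phi_m  with
   coefficients in K.  Such expressions are stable under both derivations:
   Dy acts on the coefficients only (Dy phi_m = 0 and Dy commutes with Dx),
   and Dx raises every order by one.  Hence, for u = sum_m L_m phi_m, each of
   the 2p functions  Dy^i Dx u  and  Dy^i u  (i < p) is an x-expression of
   orders n_m + 2, i.e. is described by a coefficient vector in K^N with
   N = sum_m (n_m + 2) = sum_m n_m + 2k.  Since 2p > N these 2p vectors are
   linearly dependent over K, and the coefficients of a nontrivial dependence
   are the a_i, b_i of the operator P; the dependence does not involve phi.
   (The nonvanishing of the leading coefficients is not needed.)
   The file proves: elementary facts on derivations; the linear-algebra
   dependence lemma; the calculus of x-expressions; then the theorem. *)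

Section Derivations.
Variables (A : comNzRingType) (D : A -> A).
Hypothesis hD : derivation D.

Lemma derivation0 : D 0 = 0.
Proof.
have := (fst hD) 0 0; rewrite addr0 => /eqP.
by rewrite -subr_eq subrr eq_sym => /eqP.
Qed.

Lemma derivation_sum (I : Type) (r : seq I) (F : I -> A) :
  D (\sum_(i <- r) F i) = \sum_(i <- r) D (F i).
Proof. exact: (big_morph D (fst hD) derivation0). Qed.

Lemma iter_derivation0 (j : nat) : iter j D 0 = 0.
Proof. by elim: j => //= j ->; apply: derivation0. Qed.

End Derivations.

Lemma iter_commute (A : Type) (Dx Dy : A -> A) (j : nat) (u : A) :
  (forall v, Dx (Dy v) = Dy (Dx v)) -> Dy (iter j Dx u) = iter j Dx (Dy u).
Proof. by move=> hc; elim: j => //= j IH; rewrite -hc IH. Qed.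

Lemma common_left_kernel (K : fieldType) (k s : nat) (q : 'I_k -> nat)
    (B : forall m, 'M[K]_(s, q m)) :
  (\sum_m q m < s)%N -> exists2 v : 'rV[K]_s, v != 0 & forall m, v *m B m = 0.
Proof.
move=> hs; set M := \mxrow_m B m.
have : kermx M != 0.
  rewrite -mxrank_eq0 mxrank_ker subn_eq0 -ltnNge.
  exact: leq_ltn_trans (rank_leq_col M) hs.
case/rowV0Pn => v /sub_kermxP vM0 nz; exists v => // m.
have := congr1 (fun X => submxrow X m) vM0.
rewrite /M mul_mxrow mxrowK => ->.
by apply/matrixP => i j; rewrite !mxE.
Qed.

Lemma pair_dependence (K : fieldType) (k p : nat) (d : 'I_k -> nat)
    (X Y : 'I_p -> 'I_k -> nat -> K) :
  (\sum_m d m < p + p)%N ->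
  exists a b : 'I_p -> K,
    (exists i, a i != 0 \/ b i != 0) /\
    forall m (j : 'I_(d m)), \sum_(i < p) (a i * X i m j + b i * Y i m j) = 0.
Proof.
move=> hs.
pose B m : 'M[K]_(p + p, d m) :=
  col_mx (\matrix_(i, j) X i m j) (\matrix_(i, j) Y i m j).
have [v nz vB0] := @common_left_kernel _ _ _ _ B hs.
exists (fun i => v 0 (lshift p i)), (fun i => v 0 (rshift p i)); split.
  case: (boolP [exists i, (v 0 (lshift p i) != 0) || (v 0 (rshift p i) != 0)]).
    by case/existsP => i /orP; exists i.
  rewrite negb_exists => /forallP v0; case/eqP: nz.
  apply/rowP => t; rewrite mxE -(splitK t).
  case: (split t) => i /=; have /norP[/negbNE/eqP al0 /negbNE/eqP br0] := v0 i.
    by rewrite al0.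
  by rewrite br0.
move=> m j; rewrite big_split /=.
have := congr1 (fun M : 'M[K]_(1, d m) => M 0 j) (vB0 m).
rewrite /B -[v]hsubmxK mul_row_col !mxE => vBmj; rewrite -[RHS]vBmj.
by congr (_ + _); apply: eq_bigr => i _; rewrite ?row_mxEl ?row_mxEr !mxE.
Qed.
Arguments pair_dependence {K k p}.

Section XExpressions.
Variables (A : comNzRingType) (K : fieldType) (iota : {rmorphism K -> A}).
Variables (Dx : A -> A) (k : nat) (phi : 'I_k -> A).

Definition xexpr (d : 'I_k -> nat) (c : 'I_k -> nat -> K) : A :=
  \sum_(m < k) \sum_(j < d m) iota (c m j) * iter j Dx (phi m).

Definition pad_coef (d : 'I_k -> nat) (c : 'I_k -> nat -> K) : 'I_k -> nat -> K :=
  fun m j => if (j < d m)%N then c m j else 0.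

Lemma xexpr_pad d c : xexpr (fun m => (d m).+1) (pad_coef d c) = xexpr d c.
Proof.
rewrite /xexpr; apply: eq_bigr => m _.
rewrite big_ord_recr /= /pad_coef ltnn rmorph0 mul0r addr0.
by apply: eq_bigr => j _; rewrite ltn_ord.
Qed.

Lemma xexpr_add d c1 c2 :
  xexpr d c1 + xexpr d c2 = xexpr d (fun m j => c1 m j + c2 m j).
Proof.
rewrite /xexpr -big_split; apply: eq_bigr => m _; rewrite -big_split.
by apply: eq_bigr => j _; rewrite rmorphD mulrDl.
Qed.

Lemma xexpr_lincomb p d (w : 'I_p -> K) (C : 'I_p -> 'I_k -> nat -> K) :
  \sum_(i < p) iota (w i) * xexpr d (C i) =
  xexpr d (fun m j => \sum_(i < p) w i * C i m j).
Proof.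
rewrite /xexpr; under eq_bigr do rewrite mulr_sumr.
rewrite exchange_big; apply: eq_bigr => m _.
under eq_bigr do rewrite mulr_sumr.
rewrite exchange_big; apply: eq_bigr => j _.
rewrite rmorph_sum mulr_suml; apply: eq_bigr => i _.
by rewrite rmorphM mulrA.
Qed.

Lemma xexpr0 d (c : 'I_k -> nat -> K) :
  (forall m (j : 'I_(d m)), c m j = 0) -> xexpr d c = 0.
Proof.
move=> c0; rewrite /xexpr big1 // => m _.
by rewrite big1 // => j _; rewrite c0 rmorph0 mul0r.
Qed.

Hypothesis hDx : derivation Dx.

Section DxAction.
Variable dx : K -> K.
Hypothesis hdx : forall c : K, Dx (iota c) = iota (dx c).

(* Coefficients of Dx applied to an x-expression: by Leibniz,
   Dx (c Dx^j phi) = (dx c) Dx^j phi + c Dx^(j+1) phi. *)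
Definition dx_coef (d : 'I_k -> nat) (c : 'I_k -> nat -> K) : 'I_k -> nat -> K :=
  fun m j => (if (j < d m)%N then dx (c m j) else 0) +
             (if j is j'.+1 then c m j' else 0).

Lemma xexpr_Dx d c : Dx (xexpr d c) = xexpr (fun m => (d m).+1) (dx_coef d c).
Proof.
rewrite /xexpr derivation_sum //; apply: eq_bigr => m _; rewrite derivation_sum //.
under [RHS]eq_bigr do rewrite rmorphD mulrDl.
rewrite big_split /= big_ord_recr /= ltnn rmorph0 mul0r addr0.
rewrite big_ord_recl /= rmorph0 mul0r add0r -big_split /=.
by apply: eq_bigr => j _; rewrite ltn_ord (snd hDx) hdx.
Qed.

End DxAction.

Section DyAction.
Variables (Dy : A -> A) (dy : K -> K).
Hypothesis hDy : derivation Dy.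
Hypothesis hcomm : forall u : A, Dx (Dy u) = Dy (Dx u).
Hypothesis hdy : forall c : K, Dy (iota c) = iota (dy c).
Hypothesis hphi : forall m, Dy (phi m) = 0.

(* Since the phi_m do not depend on y, Dy acts on coefficients only. *)
Lemma xexpr_Dy d c : Dy (xexpr d c) = xexpr d (fun m j => dy (c m j)).
Proof.
rewrite /xexpr derivation_sum //; apply: eq_bigr => m _; rewrite derivation_sum //.
apply: eq_bigr => j _.
rewrite (snd hDy) hdy (iter_commute _ _ j (phi m) hcomm) hphi.
by rewrite (iter_derivation0 hDx) mulr0 addr0.
Qed.

Lemma xexpr_iterDy i d c :
  iter i Dy (xexpr d c) = xexpr d (fun m j => iter i dy (c m j)).
Proof. by elim: i => //= i ->; apply: xexpr_Dy. Qed.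

End DyAction.

End XExpressions.

Arguments pad_coef {K k}.
Arguments dx_coef {K k}.

Theorem mainTheorem1
  (A : comNzRingType) (Dx Dy : A -> A)
  (hDx : derivation Dx) (hDy : derivation Dy)
  (hcomm : forall u : A, Dx (Dy u) = Dy (Dx u))
  (K : fieldType) (iota : {rmorphism K -> A}) (dx dy : K -> K)
  (hdx : forall c : K, Dx (iota c) = iota (dx c))
  (hdy : forall c : K, Dy (iota c) = iota (dy c))
  (k : nat) (n : 'I_k -> nat) (l : 'I_k -> nat -> K)
  (hlead : forall m : 'I_k, l m (n m) != 0)
  (p : nat) (hp : (\sum_(m < k) n m + 2 * k < 2 * p)%N) :
  exists a b : 'I_p -> K,
    (exists i : 'I_p, a i != 0 \/ b i != 0) /\
    forall phi : 'I_k -> A,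
      (forall m : 'I_k, Dy (phi m) = 0) ->
      P_apply iota Dx Dy a b
        (\sum_(m < k) lodo_apply iota Dx (n m) (l m) (phi m)) = 0.
Proof.
(* u = sum_m L_m phi_m has orders n_m + 1; Dy^i Dx u and Dy^i u are written
   with orders n_m + 2 and the coefficient vectors X_i and Y_i below. *)
pose d1 m := (n m).+1; pose d2 m := (n m).+2.
pose X i m j := iter i dy (dx_coef dx d1 l m j).
pose Y i m j := iter i dy (pad_coef d1 l m j).
have hN : (\sum_m d2 m < p + p)%N.
  rewrite (eq_bigr (fun m => n m + 2)%N) => [|m _]; last by rewrite addn2.
  by rewrite big_split /= sum_nat_const card_ord addnn -mul2n mulnC.
have [a [b [nontriv dep]]] := pair_dependence d2 X Y hN.
exists a, b; split => // phi hphi.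
have DyDx_u i : iter i Dy (Dx (xexpr iota Dx phi d1 l)) = xexpr iota Dx phi d2 (X i).
  by rewrite (xexpr_Dx _ _ hDx _ hdx) (xexpr_iterDy _ _ hDx _ hDy hcomm hdy hphi).
have Dy_u i : iter i Dy (xexpr iota Dx phi d1 l) = xexpr iota Dx phi d2 (Y i).
  by rewrite -xexpr_pad (xexpr_iterDy _ _ hDx _ hDy hcomm hdy hphi).
have -> : \sum_(m < k) lodo_apply iota Dx (n m) (l m) (phi m) =
          xexpr iota Dx phi d1 l by [].
rewrite /P_apply.
under eq_bigr do rewrite DyDx_u Dy_u.
rewrite big_split /= !xexpr_lincomb xexpr_add; apply: xexpr0 => m j.
by rewrite -big_split; apply: dep.
Qed.
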